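(* Suppose Algorithm SC is run on a source function $b$ with $|b(v)|\le\deg(v)$ for all $v$, with $\alpha\in(0,1/4]$ and $T$ satisfying $\alpha^2T\ge\ln(2n+5Tn^2)$, and completes all $T$ rounds without terminating in step (4). Then $|b(v)-(B\bar f)_v|\le5\alpha\deg(v)$ for every $v\in V$.
   Context: Let $G=(V,E)$ be a unit-capacity undirected graph, $n=|V|\ge3$, every vertex of degree $\deg(v)\ge1$, each edge with a fixed arbitrary orientation; $B\in\mathbb R^{V\times E}$ is the incidence matrix (column $(u,v)$ has $+1$ in row $u$, $-1$ in row $v$, $0$ elsewhere). Algorithm SC takes $b\in\mathbb R^V$ with $|b(v)|\le\deg(v)$ for all $v$, $\alpha\in(0,1/4]$ and an integer $T\ge1$. Set $w^1_{v,+}=w^1_{v,-}=1$ for all $v$. For $i=1,\dots,T$: (1) for $\circ\in\{+,-\}$, $\tilde w^i_{v,\circ}=w^i_{v,\circ}$ if $w^i_{v,\circ}\ge n$ and $\tilde w^i_{v,\circ}=0$ otherwise; (2) $\tilde\phi^i_v=(\tilde w^i_{v,+}-\tilde w^i_{v,-})/\deg(v)$; (3) for each edge $(u,v)$, $f^i(u,v)=+1$ if $\tilde\phi^i_u>\tilde\phi^i_v$, $-1$ if $\tilde\phi^i_u<\tilde\phi^i_v$, $0$ otherwise; (4) if $\langle\tilde\phi^i,b\rangle>\langle\tilde\phi^i,Bf^i\rangle$, terminate; (5) $r^i_v=(b(v)-(Bf^i)_v)/\deg(v)$; (6) $w^{i+1}_{v,+}=w^i_{v,+}(1+\alpha r^i_v)$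 and $w^{i+1}_{v,-}=w^i_{v,-}(1-\alpha r^i_v)$. If all $T$ rounds complete, output $\bar f=\frac1T\sum_{i=1}^Tf^i$. *)

From HB Require Import structures.
From mathcomp Require Import all_boot all_order all_algebra.
From mathcomp Require Import reals exp.
Set Implicit Arguments. Unset Strict Implicit. Unset Printing Implicit Defensive.
Import Order.TTheory GRing.Theory Num.Theory.
Local Open Scope ring_scope.

Section AlgorithmSC.
Variables (R : realType) (V E : finType) (src dst : E -> V).

Definition simple_graph : Prop :=
  (forall e, src e != dst e) /\
  (forall e1 e2, ((src e1 == src e2) && (dst e1 == dst e2)) ||
                 ((src e1 == dst e2) && (dst e1 == src e2)) -> e1 = e2).

Definition deg (v : V) : nat := #|[set e | (src e == v) || (dst e == v)]|.

(* Incidence matrix B applied to a flow f : E -> R. *)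
Definition Bmul (f : E -> R) (v : V) : R :=
  \sum_(e : E) (((src e == v)%:R - (dst e == v)%:R) * f e).

Definition inner (x y : V -> R) : R := \sum_(v : V) x v * y v.

Variables (b : V -> R) (alpha : R).

Definition trunc (w : R) : R := if (#|V|%:R <= w) then w else 0.

Definition phit (wp wm : V -> R) (v : V) : R :=
  (trunc (wp v) - trunc (wm v)) / (deg v)%:R.

Definition flow_of (phi : V -> R) (e : E) : R :=
  if phi (dst e) < phi (src e) then 1
  else if phi (src e) < phi (dst e) then -1 else 0.

(* weights k = (w^{k+1}_+, w^{k+1}_-), i.e. weights 0 = w^1 *)
Fixpoint weights (k : nat) : (V -> R) * (V -> R) :=
  match k with
  | O => (fun _ => 1, fun _ => 1)
  | k'.+1 =>
    let: (wp, wm) := weights k' in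
    let phi := phit wp wm in
    let f := flow_of phi in
    let r := fun v => (b v - Bmul f v) / (deg v)%:R in
    (fun v => wp v * (1 + alpha * r v), fun v => wm v * (1 - alpha * r v))
  end.

(* phi_k = \tilde\phi^{k+1}, flow k = f^{k+1} *)
Definition phi_at (k : nat) : V -> R := phit (weights k).1 (weights k).2.
Definition flow (k : nat) : E -> R := flow_of (phi_at k).

(* step (4) termination test at round k+1 *)
Definition terminates_at (k : nat) : Prop :=
  inner (phi_at k) b > inner (phi_at k) (Bmul (flow k)).

Definition fbar (T : nat) (e : E) : R := (T%:R)^-1 * \sum_(i < T) flow i e.

End AlgorithmSC.

(* The potential Phi_k = sum_v (w+_v + w-_v) grows by
   alpha * sum_v (w+_v - w-_v) r_v in a round. The truncated parts of the
   weights contribute <= 0 to this sum exactly when step (4) does not fire, and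
   the remainders lie in [0, n], so Phi_(k+1) <= Phi_k + n^2 and
   Phi_T <= 2n + T n^2 <= exp (alpha^2 T). Conversely
   w+-_T(v) = prod_i (1 +- alpha r_i(v)) >= exp (+- alpha S - alpha^2 sum_i r_i(v)^2)
   with S = sum_i r_i(v), since 1 + x >= exp (x - x^2) for |x| <= 1/2 and
   |alpha r_i| <= 2 alpha <= 1/2. Hence |S| <= 5 alpha T, while
   b(v) - (B fbar)_v = deg(v) S / T. *)

From HB Require Import structures.
From mathcomp Require Import all_boot all_order all_algebra.
From mathcomp Require Import reals exp sequences ring lra.
Set Implicit Arguments. Unset Strict Implicit. Unset Printing Implicit Defensive.
Import Order.TTheory GRing.Theory Num.Theory.
Local Open Scope ring_scope.

Section ExpBounds.
Variable R : realType.

Lemma expR_ge_taylor2 {t : R} : 0 <= t -> 1 + t + t ^+ 2 / 2 <= expR t.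
Proof.
move=> t_ge0.
have incr : nondecreasing_seq (series (exp_coeff t)).
  by apply: nondecreasing_series => n _ _; exact: exp_coeff_ge0.
apply: le_trans (nondecreasing_cvgn_le incr (is_cvg_series_exp_coeff t) 3).
rewrite /series /= !big_nat_recr //= big_geq // /exp_coeff /=.
by rewrite expr0 expr1 !factE /= add0r !divr1.
Qed.

Lemma expR_subX_le1D (x : R) : `|x| <= 1 / 2 -> expR (x - x ^+ 2) <= 1 + x.
Proof.
move=> /ler_normlP[x_ge x_le].
rewrite -[x - _]opprB expRN -[_^-1]mul1r ler_pdivrMr ?expR_gt0 //.
have [x_ge0|x_lt0] := leP 0 x.
  by have := expR_ge1Dx (x ^+ 2 - x); nra.
have t_ge0 : 0 <= x ^+ 2 - x by nra.
by have := expR_ge_taylor2 t_ge0; nra.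
Qed.

Lemma expR_sum_le_prod (I : Type) (s : seq I) (x : I -> R) :
  (forall i, `|x i| <= 1 / 2) ->
  expR (\sum_(i <- s) (x i - x i ^+ 2)) <= \prod_(i <- s) (1 + x i).
Proof.
move=> x_small; rewrite expR_sum; apply: ler_prod => i _.
by rewrite expR_ge0 expR_subX_le1D.
Qed.

End ExpBounds.

Lemma flow_of_norm_le1 (R : realType) (V E : finType) (src dst : E -> V)
    (phi : V -> R) (e : E) :
  `|flow_of src dst phi e| <= 1.
Proof.
by rewrite /flow_of; case: ifP => _; [|case: ifP => _];
  rewrite ?normrN ?normr1 ?normr0.
Qed.

Lemma Bmul_norm_le_deg (R : realType) (V E : finType) (src dst : E -> V)
    (f : E -> R) (v : V) :
  (forall e, `|f e| <= 1) -> `|Bmul src dst f v| <= (deg src dst v)%:R.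
Proof.
move=> f_le1; rewrite /Bmul /deg -sum1_card natr_sum [X in _ <= X]big_mkcond /=.
apply: le_trans (ler_norm_sum _ _ _) _; apply: ler_sum => e _.
rewrite inE normrM; have := f_le1 e; have := normr_ge0 (f e).
by case: (src e == v); case: (dst e == v) => /= ? ?;
  rewrite ?subrr ?normr0 ?mul0r ?subr0 ?sub0r ?normrN ?normr1 ?mul1r.
Qed.

Lemma Bmul_avg (R : realType) (V E : finType) (src dst : E -> V)
    (T : nat) (f : nat -> E -> R) (c : R) (v : V) :
  Bmul src dst (fun e => c * \sum_(i < T) f i e) v =
  c * \sum_(i < T) Bmul src dst (f i) v.
Proof.
rewrite /Bmul mulr_sumr; under [RHS]eq_bigr do rewrite mulr_sumr.
by rewrite exchange_big; apply: eq_bigr => e _; rewrite mulrCA !mulr_sumr.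
Qed.

Lemma trunc_gap (R : realType) (V : finType) (w : R) :
  0 < w -> 0 <= w - trunc V w <= #|V|%:R.
Proof.
move=> w_gt0; rewrite /trunc; case: ifP => w_ge; first by rewrite subrr lexx ler0n.
by rewrite subr0 (ltW w_gt0) /= ltW // ltNge w_ge.
Qed.

Section MultiplicativeWeights.
Variables (R : realType) (V E : finType) (src dst : E -> V) (b : V -> R) (alpha : R).
Hypothesis deg_ge1 : forall v, (1 <= deg src dst v)%N.
Hypothesis b_le_deg : forall v, `|b v| <= (deg src dst v)%:R.
Hypothesis alpha_gt0 : 0 < alpha.
Hypothesis alpha_le : alpha <= 1 / 4.

Local Notation deg := (deg src dst).
Local Notation Bmul := (Bmul src dst).
Local Notation weights := (weights src dst b alpha).
Local Notation phi_at := (phi_at src dst b alpha).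
Local Notation flow := (flow src dst b alpha).
Local Notation terminates_at := (terminates_at src dst b alpha).
Local Notation n := (#|V|%:R : R).

Definition residual (k : nat) (v : V) : R := (b v - Bmul (flow k) v) / (deg v)%:R.

Definition potential (k : nat) : R := \sum_v ((weights k).1 v + (weights k).2 v).

Lemma deg_gt0 v : 0 < (deg v)%:R :> R.
Proof. by rewrite ltr0n; exact: deg_ge1. Qed.

Lemma weightsS k :
  weights k.+1 = (fun v => (weights k).1 v * (1 + alpha * residual k v),
                  fun v => (weights k).2 v * (1 - alpha * residual k v)).
Proof. by rewrite /= /residual /flow /phi_at; case: (weights k). Qed.

Lemma weightsP_prod k v : (weights k).1 v = \prod_(i < k) (1 + alpha * residual i v).
Proof. by elim: k => [|k IH]; rewrite ?big_ord0 // weightsS big_ord_recr /= IH. Qed.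

Lemma weightsM_prod k v : (weights k).2 v = \prod_(i < k) (1 - alpha * residual i v).
Proof. by elim: k => [|k IH]; rewrite ?big_ord0 // weightsS big_ord_recr /= IH. Qed.

Lemma residual_norm_le2 k v : `|residual k v| <= 2.
Proof.
rewrite /residual normrM normfV (gtr0_norm (deg_gt0 v)) ler_pdivrMr ?deg_gt0 //.
have := Bmul_norm_le_deg src dst v (fun e => flow_of_norm_le1 src dst (phi_at k) e).
by have := b_le_deg v; have := ler_normB (b v) (Bmul (flow k) v); lra.
Qed.

Lemma alpha_residual_norm_le k v : `|alpha * residual k v| <= 1 / 2.
Proof.
rewrite normrM (gtr0_norm alpha_gt0).
apply: le_trans (ler_wpM2l (ltW alpha_gt0) (residual_norm_le2 k v)) _.
by have := alpha_le; lra.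
Qed.

Lemma weights_gt0 k v : 0 < (weights k).1 v /\ 0 < (weights k).2 v.
Proof.
rewrite weightsP_prod weightsM_prod.
by split; apply: prodr_gt0 => i _;
  have /ler_normlP[] := alpha_residual_norm_le i v; lra.
Qed.

Lemma weights_le_potential k v :
  (weights k).1 v <= potential k /\ (weights k).2 v <= potential k.
Proof.
have pair_le : (weights k).1 v + (weights k).2 v <= potential k.
  rewrite /potential (bigD1 v) //= lerDl; apply: sumr_ge0 => u _.
  by have [] := weights_gt0 k u; lra.
by have [] := weights_gt0 k v; lra.
Qed.

Lemma weightsP_ge k v :
  expR (\sum_(i < k) (alpha * residual i v - (alpha * residual i v) ^+ 2))
  <= (weights k).1 v.
Proof.
by rewrite weightsP_prod; apply: expR_sum_le_prod => i; exact: alpha_residual_norm_le.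
Qed.

Lemma weightsM_ge k v :
  expR (\sum_(i < k) (- (alpha * residual i v) - (alpha * residual i v) ^+ 2))
  <= (weights k).2 v.
Proof.
under eq_bigr do rewrite -sqrrN.
rewrite weightsM_prod; apply: expR_sum_le_prod => i.
by rewrite normrN; apply: alpha_residual_norm_le.
Qed.

Lemma potentialS k :
  potential k.+1 =
  potential k + alpha * \sum_v ((weights k).1 v - (weights k).2 v) * residual k v.
Proof.
rewrite /potential weightsS /= mulr_sumr -big_split /=.
by apply: eq_bigr => v _; ring.
Qed.

Lemma trunc_residual_sum k :
  \sum_v (trunc V ((weights k).1 v) - trunc V ((weights k).2 v)) * residual k v =
  inner (phi_at k) b - inner (phi_at k) (Bmul (flow k)).
Proof.
rewrite /inner -sumrB; apply: eq_bigr => v _.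
rewrite /residual /phi_at /phit; field.
by rewrite lt0r_neq0 ?deg_gt0.
Qed.

(* The truncation in step (1) keeps this error term independent of the weights. *)
Lemma gap_residual_le k v :
  ((weights k).1 v - trunc V ((weights k).1 v)
   - ((weights k).2 v - trunc V ((weights k).2 v))) * residual k v <= 2 * n.
Proof.
have [wp_gt0 wm_gt0] := weights_gt0 k v.
have /andP[? ?] := trunc_gap V wp_gt0; have /andP[? ?] := trunc_gap V wm_gt0.
apply: le_trans (ler_norm _) _; rewrite normrM mulrC.
apply: ler_pM; rewrite ?normr_ge0 ?residual_norm_le2 // ler_norml.
by apply/andP; split; lra.
Qed.

Lemma potentialS_le k : ~ terminates_at k -> potential k.+1 <= potential k + n ^+ 2.
Proof.
move=> not_term; rewrite potentialS lerD2l.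
set wp := (weights k).1; set wm := (weights k).2.
set tp := fun v => trunc V (wp v); set tm := fun v => trunc V (wm v).
have -> : \sum_v (wp v - wm v) * residual k v =
  \sum_v (tp v - tm v) * residual k v +
  \sum_v ((wp v - tp v) - (wm v - tm v)) * residual k v.
  by rewrite -big_split; apply: eq_bigr => v _ /=; ring.
have trunc_le0 : \sum_v (tp v - tm v) * residual k v <= 0.
  by rewrite trunc_residual_sum subr_le0 leNgt; apply/negP.
have gap_le : \sum_v ((wp v - tp v) - (wm v - tm v)) * residual k v <= 2 * n ^+ 2.
  apply: le_trans (_ : _ <= \sum_(v : V) 2 * n) _.
    by apply: ler_sum => v _; exact: gap_residual_le.
  by rewrite sumr_const -[_ *+ _]mulr_natr -mulrA expr2.
by have := sqr_ge0 n; have := alpha_gt0; have := alpha_le; nra.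
Qed.

Lemma potential_le T : (forall k, (k < T)%N -> ~ terminates_at k) ->
  forall k, (k <= T)%N -> potential k <= 2 * n + k%:R * n ^+ 2.
Proof.
move=> not_term; elim=> [|k IH] k_le.
  by rewrite /potential /= sumr_const mul0r addr0 -[_ *+ _]mulr_natr.
apply: le_trans (potentialS_le (not_term k k_le)) _.
by have := IH (ltnW k_le); rewrite -addn1 natrD; lra.
Qed.

Lemma defect_fbar T v : (0 < T)%N ->
  b v - Bmul (fbar src dst b alpha T) v =
  (deg v)%:R / T%:R * \sum_(i < T) residual i v.
Proof.
move=> T_gt0; rewrite Bmul_avg.
have -> : b v = T%:R^-1 * \sum_(i < T) b v.
  by rewrite sumr_const card_ord -[b v *+ T]mulr_natr mulrC mulfK // pnatr_eq0 -lt0n.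
rewrite -mulrBr -sumrB !mulr_sumr; apply: eq_bigr => i _; rewrite /residual.
by field; rewrite !lt0r_neq0 ?deg_gt0 // ltr0n.
Qed.

Variable T : nat.
Hypothesis V_gt0 : (0 < #|V|)%N.
Hypothesis not_term : forall k, (k < T)%N -> ~ terminates_at k.
Hypothesis T_large : ln (2 * n + 5 * T%:R * n ^+ 2) <= alpha ^+ 2 * T%:R.

Lemma potential_le_expR : potential T <= expR (alpha ^+ 2 * T%:R).
Proof.
have n_gt0 : 0 < n by rewrite ltr0n.
have T_ge0 : 0 <= T%:R :> R by [].
have bound_gt0 : 0 < 2 * n + 5 * T%:R * n ^+ 2 by have := sqr_ge0 n; nra.
apply: le_trans (potential_le not_term (leqnn T)) _.
apply: le_trans (_ : _ <= expR (ln (2 * n + 5 * T%:R * n ^+ 2))) _.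
  by rewrite lnK //; have := sqr_ge0 n; nra.
by rewrite ler_expR.
Qed.

Lemma norm_sum_residual_le v : `|\sum_(i < T) residual i v| <= 5 * alpha * T%:R.
Proof.
pose x i := alpha * residual i v.
have sqr_le : \sum_(i < T) x i ^+ 2 <= 4 * alpha ^+ 2 * T%:R.
  apply: le_trans (_ : _ <= \sum_(i < T) 4 * alpha ^+ 2) _.
    apply: ler_sum => i _; rewrite /x exprMn mulrC ler_wpM2r ?sqr_ge0 //.
    rewrite -real_normK ?num_real //.
    by have := residual_norm_le2 i v; have := normr_ge0 (residual i v); nra.
  by rewrite sumr_const card_ord mulr_natr.
have sum_le (s : 'I_T -> R) :
    expR (\sum_(i < T) (s i - x i ^+ 2)) <= expR (alpha ^+ 2 * T%:R) ->
    \sum_(i < T) s i <= 5 * alpha ^+ 2 * T%:R.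
  by rewrite ler_expR sumrB; lra.
have [wp_le wm_le] := weights_le_potential T v.
have up : \sum_(i < T) x i <= 5 * alpha ^+ 2 * T%:R.
  apply: sum_le; apply: le_trans (weightsP_ge T v) _.
  exact: le_trans wp_le potential_le_expR.
have down : \sum_(i < T) - x i <= 5 * alpha ^+ 2 * T%:R.
  apply: sum_le; apply: le_trans (weightsM_ge T v) _.
  exact: le_trans wm_le potential_le_expR.
suff : `|\sum_(i < T) x i| <= alpha * (5 * alpha * T%:R).
  by rewrite /x -mulr_sumr normrM (gtr0_norm alpha_gt0) ler_pM2l.
rewrite sumrN in down; rewrite ler_norml.
by apply/andP; split; lra.
Qed.

End MultiplicativeWeights.

Theorem lemma2p6 (R : realType) (V E : finType) (src dst : E -> V)
  (b : V -> R) (alpha : R) (T : nat) :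
  simple_graph src dst ->
  (3 <= #|V|)%N ->
  (forall v, (1 <= deg src dst v)%N) ->
  (forall v, `|b v| <= (deg src dst v)%:R) ->
  0 < alpha -> alpha <= 1 / 4 ->
  (1 <= T)%N ->
  ln (2 * #|V|%:R + 5 * T%:R * #|V|%:R ^+ 2) <= alpha ^+ 2 * T%:R ->
  (forall k, (k < T)%N -> ~ terminates_at src dst b alpha k) ->
  forall v, `|b v - Bmul src dst (fbar src dst b alpha T) v|
            <= 5 * alpha * (deg src dst v)%:R.
Proof.
move=> _ V_ge3 deg_ge1 b_le_deg alpha_gt0 alpha_le T_gt0 T_large not_term v.
have V_gt0 : (0 < #|V|)%N by exact: leq_trans V_ge3.
rewrite (defect_fbar b alpha deg_ge1 v T_gt0) normrM ger0_norm; last first.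
  by rewrite divr_ge0.
apply: le_trans (ler_wpM2l _ (norm_sum_residual_le deg_ge1 b_le_deg
  alpha_gt0 alpha_le V_gt0 not_term T_large v)) _; first by rewrite divr_ge0.
suff -> : (deg src dst v)%:R / T%:R * (5 * alpha * T%:R) =
          5 * alpha * (deg src dst v)%:R by [].
by field; rewrite pnatr_eq0 -lt0n.
Qed.
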